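(* In a non-degenerate RiFle assignment game, the set of unmatched agents is the same in all stable outcomes.
   Context: A RiFle assignment game consists of two disjoint sets of agents $P=\{p_1,\dots,p_n\}$ and $Q=\{q_1,\dots,q_n\}$, a pair of nonnegative real numbers $(\beta_{ij},\gamma_{ij})$ for every pair $(p_i,q_j)\in P\times Q$ (write $\alpha_{ij}=\beta_{ij}+\gamma_{ij}$), and a designation of every agent as rigid or flexible. Let $\mathcal R$ be the set of pairs with at least one rigid agent and $\mathcal F$ the set of pairs with both agents flexible. An outcome $(\bar u,\bar v;\mu)$ consists of a matching $\mu$ between $P$ and $Q$ (write $p_i\stackrel{\mu}{\longleftrightarrow} q_j$) and payoff vectors $\bar u,\bar v\in\mathbb R^n$. It is feasible if: (1) $u_i\ge0$, $v_j\ge0$; (2) if a rigid $p_i$ is matched to $q_j$ then $u_i=\beta_{ij}$ and, if $q_j$ is flexible, $v_j\ge\gamma_{ij}$; symmetrically for a rigid $q_j$ matched to $p_i$: $v_j=\gamma_{ij}$ and, if $p_i$ is flexible, $u_i\ge\beta_{ij}$; (3) $\sum_iu_i+\sum_jv_j=\sum_{p_i\stackrel{\mu}{\longleftrightarrow}q_j}\alpha_{ij}$. It is stable if feasible and $u_i+v_j\ge\alpha_{ij}$ for $(p_i,q_j)\in\mathcal F$ and ($u_i\ge\beta_{ij}$ or $v_j\ge\gamma_{ij}$) for $(p_i,q_j)\in\mathcal R$. Reservation prices are modeled by rigid dummy agents: an agent is unmatched in an outcome if he is not matched to a real agent; for the following definition such an agent is regarded as matched to a rigid dummy agent (whose prescribed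 share for him is his reservation price). Given a coalition $C\subseteq P\cup Q$ and a matching $\mu$, the total payoff to $C$ under $\mu$ is forced if every pair matched under $\mu$ with one agent in $C$ and the other outside $C$ contains a rigid agent; the forced payoff is then $\sum_{p_i\in C,\ p_i\stackrel{\mu}{\longleftrightarrow}q_j}\beta_{ij}+\sum_{q_j\in C,\ p_i\stackrel{\mu}{\longleftrightarrow}q_j}\gamma_{ij}$. The game is non-degenerate if for any two matchings $\mu,\mu'$: whenever $C$ is a minimal coalition such that the payoff to $C$ is forced under both $\mu$ and $\mu'$, and the two forced payoffs are equal, then $\mu$ and $\mu'$ coincide on $C$. *)

From mathcomp Require Import all_boot all_order all_algebra.
Set Implicit Arguments. Unset Strict Implicit. Unset Printing Implicit Defensive.
Import Order.TTheory GRing.Theory Num.Theory.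
Local Open Scope ring_scope.

(* Real agents: P = {p_i | i : 'I_n}, Q = {q_j | j : 'I_n}.
   An agent of P u Q is encoded as an element of 'I_n + 'I_n
   (inl i = p_i, inr j = q_j). *)
Record rifle_game (R : realFieldType) (n : nat) := RifleGame {
  beta  : 'I_n -> 'I_n -> R;   (* share of p_i in pair (p_i,q_j) *)
  gamma : 'I_n -> 'I_n -> R;   (* share of q_j in pair (p_i,q_j) *)
  resP  : 'I_n -> R;           (* reservation price of p_i (share prescribed by its rigid dummy) *)
  resQ  : 'I_n -> R;
  rigidP : 'I_n -> bool;
  rigidQ : 'I_n -> bool
}.

Section RiFle.
Variables (R : realFieldType) (n : nat) (G : rifle_game R n).

Definition alpha (i j : 'I_n) : R := beta G i j + gamma G i j.

Definition flex_pair (i j : 'I_n) : bool := ~~ rigidP G i && ~~ rigidQ G j.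

(* A (partial) matching of real agents: mu i = Some j means p_i <-> q_j,
   mu i = None means p_i is unmatched (i.e. matched to its rigid dummy). *)
Definition is_matching (mu : 'I_n -> option 'I_n) : Prop :=
  forall i i' j, mu i = Some j -> mu i' = Some j -> i = i'.

Definition mateQ (mu : 'I_n -> option 'I_n) (j : 'I_n) : option 'I_n :=
  [pick i | mu i == Some j].

Definition unmatched (mu : 'I_n -> option 'I_n) : {set 'I_n + 'I_n} :=
  [set a | match a with
           | inl i => mu i == None
           | inr j => mateQ mu j == None
           end].

Definition feasible (u v : 'I_n -> R) (mu : 'I_n -> option 'I_n) : Prop :=
  [/\ is_matching mu,
      (forall i, 0 <= u i) /\ (forall j, 0 <= v j),
      (forall i j, mu i = Some j ->
         (rigidP G i -> u i = beta G i j /\ (~~ rigidQ G j -> gamma G i j <= v j)) /\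
         (rigidQ G j -> v j = gamma G i j /\ (~~ rigidP G i -> beta G i j <= u i))),
      (forall i, mu i = None ->
         if rigidP G i then u i = resP G i else resP G i <= u i) /\
      (forall j, mateQ mu j = None ->
         if rigidQ G j then v j = resQ G j else resQ G j <= v j)
    & (* (3); dummies' own payoffs cancel with their own shares *)
      \sum_i u i + \sum_j v j =
      \sum_i (if mu i is Some j then alpha i j else resP G i)
      + \sum_j (if mateQ mu j is None then resQ G j else 0)].

Definition stable (u v : 'I_n -> R) (mu : 'I_n -> option 'I_n) : Prop :=
  [/\ feasible u v mu,
      (forall i j, flex_pair i j -> alpha i j <= u i + v j),
      (forall i j, ~~ flex_pair i j -> beta G i j <= u i \/ gamma G i j <= v j)
    & (* no agent is blocked by his dummy: he gets at least his reservation price *)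
      (forall i, resP G i <= u i) /\ (forall j, resQ G j <= v j)].

(* The total payoff to coalition C (of real agents) is forced under mu:
   every mu-pair with exactly one agent in C contains a rigid agent
   (pairs with a dummy always do). *)
Definition forced (mu : 'I_n -> option 'I_n) (C : {set 'I_n + 'I_n}) : Prop :=
  forall i j, mu i = Some j -> (inl i \in C) != (inr j \in C) ->
    rigidP G i || rigidQ G j.

Definition forced_payoff (mu : 'I_n -> option 'I_n) (C : {set 'I_n + 'I_n}) : R :=
  \sum_(i | inl i \in C) (if mu i is Some j then beta G i j else resP G i)
  + \sum_(j | inr j \in C) (if mateQ mu j is Some i then gamma G i j else resQ G j).

Definition coincide_on (mu mu' : 'I_n -> option 'I_n) (C : {set 'I_n + 'I_n}) : Prop :=
  (forall i, inl i \in C -> mu i = mu' i) /\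
  (forall j, inr j \in C -> mateQ mu j = mateQ mu' j).

Definition non_degenerate : Prop :=
  forall mu mu' : 'I_n -> option 'I_n, is_matching mu -> is_matching mu' ->
  forall C : {set 'I_n + 'I_n},
    C != set0 ->
    forced mu C -> forced mu' C ->
    (forall C' : {set 'I_n + 'I_n}, C' \proper C -> C' != set0 -> ~ (forced mu C' /\ forced mu' C')) ->
    forced_payoff mu C = forced_payoff mu' C ->
    coincide_on mu mu' C.

End RiFle.

(* Let (u,v;mu) and (u',v';mu') be stable and z the difference of their payoff vectors.
   Stability and feasibility of (u,v;mu) force every agent outside a flexible pair of mu to
   receive exactly his share, and every flexible pair of mu to split exactly its value;
   stability of (u',v';mu') then gives z <= 0 at the agents unmatched under mu and along
   the pairs of mu (at one member of each rigid pair, summed over each flexible pair), and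
   symmetrically z >= 0 for mu'.
   Suppose a0 is unmatched under mu but not under mu'. Follow the alternating path from a0
   along mu', mu, mu', ... and cut it into maximal runs linked by flexible pairs. Each run is
   a minimal coalition whose payoff is forced under both matchings and on which they differ,
   so by non-degeneracy z does not sum to zero over it. The sign conditions then make
   (-1)^t z nonpositive at the first agent of each run and negative at its last one, so the
   path can never stop; this is absurd since it does not repeat agents. *)

From mathcomp Require Import all_boot all_order all_algebra.
From mathcomp Require Import lra.
Set Implicit Arguments. Unset Strict Implicit. Unset Printing Implicit Defensive.
Import Order.TTheory GRing.Theory Num.Theory.
Local Open Scope ring_scope.

(* The last hypothesis says that (-1)^s z s is nonincreasing for l <= s <= r. *)
Lemma alternating_run_sum (R : realDomainType) (z : nat -> R) (l r : nat) :
  (l <= r)%N -> (-1) ^+ l * z l <= 0 ->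
  (forall s, (l <= s < r)%N -> 0 <= (-1) ^+ s * (z s + z s.+1)) ->
  (-1) ^+ r * z r <= (-1) ^+ r * \sum_(l <= s < r.+1) z s <= 0.
Proof.
move=> + zl; elim: r => [|r IH]; first by rewrite leqn0 => /eqP <- _; rewrite big_nat1 lexx.
rewrite leq_eqVlt => /orP [/eqP <- _|lr zrun]; first by rewrite big_nat1 lexx.
have zrun_r s : (l <= s < r)%N -> 0 <= (-1) ^+ s * (z s + z s.+1).
  by case/andP=> ls sr; apply: zrun; rewrite ls ltnW.
have /andP [le_zr_sum sum_le0] := IH lr zrun_r.
have := zrun r; rewrite -ltnS lr ltnSn mulrDr => /(_ isT) step.
rewrite big_nat_recr 1?ltnW //= exprS !mulN1r mulrDr; apply/andP; split; lra.
Qed.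

Section FlexComponents.
Variables (A : finType) (flex : pred A).

(* A coalition is closed under the flexible pairs of a matching iff its payoff is forced
   (see [forcedE] below). *)
Definition flex_closed (f : A -> option A) (C : {set A}) :=
  forall x y, f x = Some y -> flex x -> flex y -> x \in C -> y \in C.

Definition flex_component (f g : A -> option A) (C : {set A}) :=
  [/\ C != set0, flex_closed f C, flex_closed g C &
      forall C' : {set A}, C' \subset C -> C' != set0 ->
        flex_closed f C' -> flex_closed g C' -> C \subset C'].

End FlexComponents.

Section AlternatingWalk.
Variables (R : realDomainType) (A : finType) (m : bool -> A -> option A).
Variables (side : A -> bool) (flex : pred A) (z : A -> R) (a0 : A).

Hypothesis m_sym : forall b x y, m b x = Some y -> m b y = Some x.
(* [side] 2-colours both matchings; it only serves to make the alternating walk injective. *)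
Hypothesis m_side : forall b x y, m b x = Some y -> side y = ~~ side x.
Hypothesis z_unmatched : forall b x, m b x = None -> 0 <= (-1) ^+ b * z x.
Hypothesis z_rigid_pair : forall b x y, m b x = Some y -> ~~ (flex x && flex y) ->
  0 <= (-1) ^+ b * z x \/ 0 <= (-1) ^+ b * z y.
Hypothesis z_flex_pair : forall b x y, m b x = Some y -> flex x -> flex y ->
  0 <= (-1) ^+ b * (z x + z y).
Hypothesis z_nondegenerate : forall C, flex_component flex (m true) (m false) C ->
  \sum_(x in C) z x = 0 -> {in C, m true =1 m false}.
Hypothesis a0_unmatched : m true a0 = None.

Fixpoint walk (t : nat) : option A :=
  if t is s.+1 then obind (m (odd s)) (walk s) else Some a0.

Definition vertex (t : nat) : A := odflt a0 (walk t).

Lemma walkS_Some t y :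
  walk t.+1 = Some y -> exists2 x, walk t = Some x & m (odd t) x = Some y.
Proof. by rewrite /=; case: (walk t) => // x; exists x. Qed.

Lemma walk_side t x : walk t = Some x -> side x = side a0 (+) odd t.
Proof.
elim: t x => [x [<-]|t IH y /walkS_Some [x /IH side_x /m_side ->]]; first by rewrite addbF.
by rewrite side_x /= addbN.
Qed.

Lemma walk_eq_start t : walk t = Some a0 -> t = 0%N.
Proof.
case: t => // t walk_t; have [x _ /m_sym] := walkS_Some walk_t.
have /= := walk_side walk_t; case: (odd t) => [_|]; first by rewrite a0_unmatched.
by rewrite addbT; case: (side a0).
Qed.

Lemma walk_inj s t x : walk s = Some x -> walk t = Some x -> s = t.
Proof.
elim: s t x => [|s IH] [|t] x //; first by move=> [<-] /walk_eq_start.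
  by move=> + [x_a0]; rewrite -x_a0 => /walk_eq_start.
move=> walk_s walk_t; have odd_st : odd s = odd t.
  have := walk_side walk_s; rewrite (walk_side walk_t) /=.
  by case: (side a0); case: (odd s); case: (odd t).
have [x1 walk_x1 /m_sym x_x1] := walkS_Some walk_s.
have [x2 walk_x2 /m_sym] := walkS_Some walk_t.
by rewrite -odd_st x_x1 => -[x12]; rewrite (IH t x1) // x12.
Qed.

Lemma walk_vertex s t : (s <= t)%N -> walk t != None -> walk s = Some (vertex s).
Proof.
move=> st walk_t; rewrite /vertex; suff: walk s != None by case: (walk s).
elim: t st walk_t => [|t IH]; first by rewrite leqn0 => /eqP ->.
rewrite leq_eqVlt => /orP [/eqP -> //|st] walk_t; apply: IH => //.
by move: walk_t => /=; case: (walk t).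
Qed.

Lemma walk_step t : walk t.+1 != None -> m (odd t) (vertex t) = Some (vertex t.+1).
Proof.
by move=> walk_t; have /= := walk_vertex (leqnn _) walk_t; rewrite (walk_vertex (leqnSn t)).
Qed.

Lemma walk_neighbour s x b y : walk s = Some x -> m b x = Some y ->
  (b = odd s /\ walk s.+1 = Some y) \/ exists2 r, s = r.+1 & b = odd r /\ walk r = Some y.
Proof.
move=> walk_s x_y; have [b_s|b_s] := eqVneq b (odd s).
  by left; rewrite /= walk_s /= -b_s.
right; move: x_y; case: s walk_s b_s => [[<-]|r walk_r b_r x_y].
  by case: b => // _; rewrite a0_unmatched.
have [x' walk_x' /m_sym] := walkS_Some walk_r.
have odd_r : odd r = b by move: b_r => /=; case: (b); case: (odd r).
by rewrite odd_r x_y => -[->]; exists r.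
Qed.

Definition flex_step s := [&& walk s.+1 != None, flex (vertex s) & flex (vertex s.+1)].

Definition run l t : {set A} := [set vertex s | s : 'I_t.+1 & (l <= s)%N].

Lemma mem_run l t s : (l <= s <= t)%N -> vertex s \in run l t.
Proof.
by case/andP=> ls st; apply/imsetP; exists (Ordinal (st : (s < t.+1)%N)); rewrite ?inE.
Qed.

Lemma runP l t x : x \in run l t -> exists2 s, (l <= s <= t)%N & x = vertex s.
Proof. by case/imsetP=> s; rewrite inE => ls ->; exists s => //; rewrite ls -ltnS ltn_ord. Qed.

Lemma sum_run l t : walk t != None ->
  \sum_(x in run l t) z x = \sum_(l <= s < t.+1) z (vertex s).
Proof.
move=> walk_t; rewrite big_imset /=; last first.
  move=> s1 s2 _ _ eq_vertex; apply: val_inj; apply: (@walk_inj _ _ (vertex s1)).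
    by rewrite (walk_vertex _ walk_t) // -ltnS ltn_ord.
  by rewrite eq_vertex (walk_vertex _ walk_t) // -ltnS ltn_ord.
by rewrite big_geq_mkord; apply: eq_bigl => s; rewrite inE.
Qed.

Section Absurd.
Hypothesis a0_matched : m false a0 != None.

Lemma walk_matchings_differ t : walk t != None -> m true (vertex t) != m false (vertex t).
Proof.
case: t => [_|t walk_t]; first by rewrite /vertex /= a0_unmatched eq_sym.
have [x walk_x /m_sym x_prev] := walkS_Some (walk_vertex (leqnn _) walk_t).
apply/negP => /eqP same.
have walk_x2 : walk t.+2 = Some x.
  have -> : walk t.+2 = obind (m (odd t.+1)) (walk t.+1) by [].
  by rewrite (walk_vertex (leqnn _) walk_t) /=; case: (odd t) x_prev => /= <-; rewrite same.
by have /eqP := walk_inj walk_x2 walk_x; rewrite gtn_eqF.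
Qed.

Section Run.
Variables l t : nat.
Hypothesis l_le_t : (l <= t)%N.
Hypothesis walk_t : walk t != None.
Hypothesis run_start : (l == 0%N) || ~~ flex_step l.-1.
Hypothesis run_flex : forall s, (l <= s < t)%N -> flex_step s.
Hypothesis run_end : ~~ flex_step t.

Lemma run_closed b : flex_closed flex (m b) (run l t).
Proof.
move=> x y x_y flex_x flex_y /runP [s /andP [ls st] x_s]; subst x.
have [[b_s walk_y]|[r s_r [b_r walk_y]]] := walk_neighbour (walk_vertex st walk_t) x_y.
  have vy : vertex s.+1 = y by rewrite /vertex walk_y.
  have s_lt_t : (s < t)%N.
    rewrite ltn_neqAle st andbT; apply: contraNneq run_end => s_t.
    by rewrite -s_t /flex_step walk_y vy flex_x flex_y.
  by rewrite -vy mem_run // (leqW ls).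
subst s; have vy : vertex r = y by rewrite /vertex walk_y.
rewrite -vy mem_run // (leq_trans (leqnSn r) st) andbT.
case: (leqP l r) => // r_lt_l.
have l_r : l = r.+1 by apply/eqP; rewrite eqn_leq r_lt_l ls.
by move: run_start; rewrite l_r /= /flex_step (walk_vertex st walk_t) vy flex_y flex_x.
Qed.

Lemma run_minimal (C : {set A}) : C \subset run l t -> C != set0 ->
  flex_closed flex (m true) C -> flex_closed flex (m false) C -> run l t \subset C.
Proof.
move=> sub_C /set0Pn [x x_C] closed_true closed_false.
have closed_C b : flex_closed flex (m b) C by case: b.
have step_C s : (l <= s < t)%N -> (vertex s \in C) = (vertex s.+1 \in C).
  move=> /run_flex /and3P [walk_s1 flex_s flex_s1]; have s_s1 := walk_step walk_s1.
  by apply/idP/idP; [apply: closed_C s_s1 _ _ | apply: closed_C (m_sym s_s1) _ _].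
have run_C s : (l <= s <= t)%N -> (vertex s \in C) = (vertex l \in C).
  elim: s => [|s IH]; first by rewrite leqn0 => /andP [/eqP -> _].
  rewrite leq_eqVlt ltnS => /andP [/orP [/eqP -> //|ls] st].
  by rewrite -step_C ?IH ?ls ?(ltnW st).
have [s ls_t x_s] := runP (subsetP sub_C x x_C).
by apply/subsetP => _ /runP [s' ls_t' ->]; rewrite run_C // -(run_C s) // -x_s.
Qed.

Lemma run_component : flex_component flex (m true) (m false) (run l t).
Proof.
split; [|exact: run_closed|exact: run_closed|exact: run_minimal].
by apply/set0Pn; exists (vertex t); rewrite mem_run // l_le_t leqnn.
Qed.

Lemma run_sign : (-1) ^+ l * z (vertex l) <= 0 -> (-1) ^+ t * z (vertex t) < 0.
Proof.
move=> start_sign.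
have sum_neq0 : \sum_(l <= s < t.+1) z (vertex s) != 0.
  rewrite -sum_run //; apply/eqP => /(z_nondegenerate run_component) same.
  by move/negP: (walk_matchings_differ walk_t); apply; rewrite same ?mem_run ?l_le_t ?leqnn.
have flex_sign s : (l <= s < t)%N -> 0 <= (-1) ^+ s * (z (vertex s) + z (vertex s.+1)).
  move=> /run_flex /and3P [walk_s1 flex_s flex_s1]; rewrite -signr_odd.
  exact: z_flex_pair (walk_step walk_s1) flex_s flex_s1.
have /andP [le_sum sum_le0] := alternating_run_sum l_le_t start_sign flex_sign.
apply: le_lt_trans le_sum _; rewrite lt_neqAle sum_le0 andbT.
by rewrite mulf_eq0 signr_eq0.
Qed.

End Run.

(* [l] is where the current run of flexible pairs started. *)
Definition run_invariant t := exists l,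
  [/\ (l <= t)%N, walk t != None, (l == 0%N) || ~~ flex_step l.-1,
      forall s, (l <= s < t)%N -> flex_step s & (-1) ^+ l * z (vertex l) <= 0].

Lemma run_invariant0 : run_invariant 0.
Proof.
exists 0%N; split => //.
by have := z_unmatched a0_unmatched; rewrite /vertex /= expr0 expr1 mul1r mulN1r oppr_ge0.
Qed.

Lemma run_invariantS t : run_invariant t -> run_invariant t.+1.
Proof.
move=> [l [l_le_t walk_t start run_fl sign_l]].
have [fs|nfs] := boolP (flex_step t).
  exists l; split; [exact: leqW | by case/and3P: fs | done | | done].
  move=> s /andP [ls]; rewrite ltnS leq_eqVlt => /orP [/eqP -> //|st].
  by apply: run_fl; rewrite ls st.
have sign_t := run_sign l_le_t walk_t start run_fl nfs sign_l.
case t_y: (m (odd t) (vertex t)) => [y|]; last first.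
  by have := z_unmatched t_y; rewrite signr_odd; move: sign_t; rewrite ltNge => /negP.
have walk_y : walk t.+1 = Some y by rewrite /= (walk_vertex (leqnn t) walk_t).
have vy : vertex t.+1 = y by rewrite /vertex walk_y.
have rigid : ~~ (flex (vertex t) && flex y) by move: nfs; rewrite /flex_step walk_y vy.
exists t.+1; split => //; first by rewrite walk_y.
  by move=> s /andP [ts]; rewrite ltnNge ts.
case: (z_rigid_pair t_y rigid); rewrite signr_odd; first by rewrite leNgt sign_t.
by rewrite vy exprS mulN1r mulNr oppr_le0.
Qed.

Lemma walk_absurd : False.
Proof.
have inv t : run_invariant t by elim: t => [|t]; [exact: run_invariant0|exact: run_invariantS].
have walk_def t : walk t = Some (vertex t).
  by have [l [_ walk_t _ _ _]] := inv t; exact: walk_vertex (leqnn t) walk_t.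
have vertex_inj : injective (fun s : 'I_#|A|.+1 => vertex s).
  move=> s1 s2 eq_vertex; apply/val_inj/(walk_inj (walk_def s1)).
  by rewrite eq_vertex walk_def.
by have := leq_card _ vertex_inj; rewrite card_ord ltnn.
Qed.

End Absurd.

Lemma unmatched_stays_unmatched : m false a0 = None.
Proof. by apply/eqP/negPn/negP => /walk_absurd. Qed.

End AlternatingWalk.

Section Agents.
Variables (R : realFieldType) (n : nat) (G : rifle_game R n).
Local Notation agent := ('I_n + 'I_n)%type.
Implicit Types (mu : 'I_n -> option 'I_n) (u v : 'I_n -> R) (a b : agent) (C : {set agent}).

Definition partner mu a : option agent :=
  match a with inl i => omap inr (mu i) | inr j => omap inl (mateQ mu j) end.

Definition flexible a : bool :=
  match a with inl i => ~~ rigidP G i | inr j => ~~ rigidQ G j end.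

Definition payoff u v a : R := match a with inl i => u i | inr j => v j end.

Definition share mu a : R :=
  match a with
  | inl i => if mu i is Some j then beta G i j else resP G i
  | inr j => if mateQ mu j is Some i then gamma G i j else resQ G j
  end.

Definition surplus u v mu a := payoff u v a - share mu a.

Definition flex_mate mu a : agent :=
  if partner mu a is Some b then (if flexible a && flexible b then b else a) else a.

Lemma unmatchedE mu : unmatched mu = [set a | partner mu a == None].
Proof. by apply/setP => -[i|j]; rewrite !inE /=; [case: (mu i)|case: (mateQ mu j)]. Qed.

Lemma forced_payoffE mu C : forced_payoff G mu C = \sum_(a in C) share mu a.
Proof. by rewrite big_sumType. Qed.

Lemma partner_side mu a b : partner mu a = Some b -> is_inl b = ~~ is_inl a.
Proof.
by case: a => [i|j] /=; [case: (mu i) => // ? [<-]|case: (mateQ mu j) => // ? [<-]].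
Qed.

Section Matching.
Variable mu : 'I_n -> option 'I_n.
Hypothesis mu_matching : is_matching mu.

Lemma mateQ_Some i j : mateQ mu j = Some i <-> mu i = Some j.
Proof.
rewrite /mateQ; case: pickP => [i' /eqP mu_i'|none]; last first.
  by split=> // mu_i; have := none i; rewrite mu_i eqxx.
by split=> [[<-] //|mu_i]; rewrite (mu_matching mu_i mu_i').
Qed.

Lemma partnerP a b : partner mu a = Some b -> exists i j,
  mu i = Some j /\ ((a, b) = (inl i, inr j) \/ (a, b) = (inr j, inl i)).
Proof.
case: a => [i|j] /=.
  by case mu_i: (mu i) => [j|] // [<-]; exists i, j; split; [|left].
by case mu_j: (mateQ mu j) => [i|] // [<-]; exists i, j; split; [apply/mateQ_Some|right].
Qed.

Lemma partner_sym a b : partner mu a = Some b -> partner mu b = Some a.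
Proof.
case/partnerP=> i [j [mu_ij [[-> ->]|[-> ->]]]] /=; last by rewrite mu_ij.
by have [_ ->] := mateQ_Some i j.
Qed.

Lemma share_matched i j : mu i = Some j ->
  share mu (inl i) = beta G i j /\ share mu (inr j) = gamma G i j.
Proof. by move=> mu_ij; rewrite /= mu_ij; have [_ ->] := mateQ_Some i j. Qed.

Lemma sum_mateQ (F : 'I_n -> 'I_n -> R) :
  \sum_j (if mateQ mu j is Some i then F i j else 0) =
  \sum_i (if mu i is Some j then F i j else 0).
Proof.
transitivity (\sum_j \sum_i (if mu i == Some j then F i j else 0)).
  apply: eq_bigr => j _; case mu_j: (mateQ mu j) => [i0|].
    have mu_i0 := proj1 (mateQ_Some i0 j) mu_j.
    rewrite (bigD1 i0) //= mu_i0 eqxx big1 ?addr0 // => i ne_i.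
    by case: eqP => // mu_i; rewrite (mu_matching mu_i mu_i0) eqxx in ne_i.
  rewrite big1 // => i _; case: eqP => // /mateQ_Some.
  by rewrite mu_j.
rewrite exchange_big; apply: eq_bigr => i _; case: (mu i) => [j0|]; last by rewrite big1.
rewrite (bigD1 j0) //= eqxx big1 ?addr0 // => j ne_j.
by case: eqP => // -[j0j]; rewrite j0j eqxx in ne_j.
Qed.

Lemma forcedE C : forced G mu C <-> flex_closed flexible (partner mu) C.
Proof.
split=> [forced_C a b ab flex_a flex_b|closed_C i j mu_ij ne_C].
  have [i [j [mu_ij ab_ij]]] := partnerP ab.
  have same_C : (inl i \in C) = (inr j \in C).
    apply/eqP; apply: contraFT (forced_C i j mu_ij) _.
    by case: ab_ij flex_a flex_b => -[-> ->] /= /negbTE-> /negbTE->.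
  by case: ab_ij => -[-> ->]; rewrite same_C.
apply/negPn/negP; rewrite negb_or => /andP [flex_i flex_j]; move/negP: ne_C; apply.
have ij : partner mu (inl i) = Some (inr j) by rewrite /= mu_ij.
apply/eqP; apply/idP/idP; [exact: closed_C ij _ _ | exact: closed_C (partner_sym ij) _ _].
Qed.

Lemma flex_mate_involutive : involutive (flex_mate mu).
Proof.
move=> a; rewrite /flex_mate; case ab: (partner mu a) => [b|]; last by rewrite ab.
by case: ifP => flex_ab; rewrite ?ab ?flex_ab // (partner_sym ab) andbC flex_ab.
Qed.

End Matching.

Lemma stable_matching u v mu : stable G u v mu -> is_matching mu.
Proof. by case=> -[]. Qed.

Lemma feasible_matched_rigid u v mu i j : feasible G u v mu -> mu i = Some j ->
  ~~ flex_pair G i j -> beta G i j <= u i /\ gamma G i j <= v j.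
Proof.
case=> _ _ /(_ i j) shares _ _ /shares [rigid_i rigid_j] flex_ij.
have [ri|fi] := boolP (rigidP G i).
  have [-> gamma_le] := rigid_i ri; split => //.
  by have [rj|fj] := boolP (rigidQ G j); [have [-> _] := rigid_j rj|exact: gamma_le].
have rj : rigidQ G j by move: flex_ij; rewrite /flex_pair fi; case: (rigidQ G j).
by have [-> /(_ fi) beta_le] := rigid_j rj.
Qed.

Section NoBlocking.
Variables (u v : 'I_n -> R) (mu' mu : 'I_n -> option 'I_n).
Hypotheses (uv_stable : stable G u v mu') (mu_matching : is_matching mu).

Lemma stable_share_unmatched a : partner mu a = None -> share mu a <= payoff u v a.
Proof.
case: uv_stable => _ _ _ [resP_le resQ_le].
by case: a => [i|j] /=; [case: (mu i)|case: (mateQ mu j)].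
Qed.

Lemma stable_share_rigid_pair a b : partner mu a = Some b -> ~~ (flexible a && flexible b) ->
  share mu a <= payoff u v a \/ share mu b <= payoff u v b.
Proof.
case: uv_stable => _ _ rigid_le _ /(partnerP mu_matching) [i [j [mu_ij ab_ij]]].
have [share_i share_j] := share_matched mu_matching mu_ij.
case: ab_ij => -[-> ->]; rewrite share_i share_j /=; first exact: rigid_le.
by rewrite andbC => /rigid_le; rewrite or_comm.
Qed.

Lemma stable_share_flex_pair a b : partner mu a = Some b -> flexible a -> flexible b ->
  share mu a + share mu b <= payoff u v a + payoff u v b.
Proof.
case: uv_stable => _ flex_le _ _ /(partnerP mu_matching) [i [j [mu_ij ab_ij]]].
have [share_i share_j] := share_matched mu_matching mu_ij.
case: ab_ij => -[-> ->]; rewrite share_i share_j /= => flex_a flex_b.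
  exact/flex_le/andP.
by rewrite addrC [v j + _]addrC; apply/flex_le/andP.
Qed.

End NoBlocking.

Section Stable.
Variables (u v : 'I_n -> R) (mu : 'I_n -> option 'I_n).
Hypothesis uv_stable : stable G u v mu.
Let mu_matching := stable_matching uv_stable.

Lemma surplus_flex_mate_ge0 a : 0 <= surplus u v mu a + surplus u v mu (flex_mate mu a).
Proof.
rewrite /surplus /flex_mate; case ab: (partner mu a) => [b|]; last first.
  by have := stable_share_unmatched uv_stable ab; lra.
case: ifP => [/andP [flex_a flex_b]|/negbT rigid].
  by have := stable_share_flex_pair uv_stable mu_matching ab flex_a flex_b; lra.
have [i [j [mu_ij ab_ij]]] := partnerP mu_matching ab.
have [share_i share_j] := share_matched mu_matching mu_ij.
have [beta_le gamma_le] : beta G i j <= u i /\ gamma G i j <= v j.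
  apply: feasible_matched_rigid mu_ij _; first by case: uv_stable.
  by case: ab_ij rigid => -[-> ->] //=; rewrite andbC.
by case: ab_ij => -[-> _]; rewrite ?share_i ?share_j /=; lra.
Qed.

Lemma sum_surplus : \sum_a surplus u v mu a = 0.
Proof.
case: uv_stable => -[_ _ _ _ total] _ _ _.
rewrite /surplus sumrB !big_sumType /= total; apply/eqP; rewrite subr_eq0; apply/eqP.
have -> : \sum_i (if mu i is Some j then alpha G i j else resP G i) =
    \sum_i (if mu i is Some j then beta G i j else resP G i) +
    \sum_i (if mu i is Some j then gamma G i j else 0).
  by rewrite -big_split /=; apply: eq_bigr => i _; case: (mu i); rewrite ?addr0.
rewrite -addrA -(sum_mateQ mu_matching (gamma G)) -big_split /=; congr (_ + _).
by apply: eq_bigr => j _; case: (mateQ mu j) => [i|]; rewrite ?addr0 ?add0r.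
Qed.

Lemma surplus_flex_mate a : surplus u v mu (flex_mate mu a) = - surplus u v mu a.
Proof.
(* Each orbit of [flex_mate] has nonnegative surplus, and the total surplus is zero. *)
have mate_inj := inv_inj (flex_mate_involutive mu_matching).
have sum0 : \sum_a (surplus u v mu a + surplus u v mu (flex_mate mu a)) = 0.
  have reindex : \sum_a surplus u v mu (flex_mate mu a) = \sum_a surplus u v mu a.
    by rewrite [RHS](reindex_inj mate_inj).
  by rewrite big_split /= reindex sum_surplus addr0.
by have /(_ a) := psumr_eq0P (fun a _ => surplus_flex_mate_ge0 a) sum0; lra.
Qed.

Lemma payoff_share a : flex_mate mu a = a -> payoff u v a = share mu a.
Proof. by move=> fixed_a; have := surplus_flex_mate a; rewrite fixed_a /surplus; lra. Qed.

Lemma payoff_share_pair a :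
  payoff u v a + payoff u v (flex_mate mu a) = share mu a + share mu (flex_mate mu a).
Proof. by have := surplus_flex_mate a; rewrite /surplus; lra. Qed.

Lemma sum_payoff_closed C : flex_closed flexible (partner mu) C ->
  \sum_(a in C) payoff u v a = \sum_(a in C) share mu a.
Proof.
move=> closed_C; have mate_C a : (flex_mate mu a \in C) = (a \in C).
  suff mate_C' x : x \in C -> flex_mate mu x \in C.
    by apply/idP/idP => [/mate_C'|/mate_C' //]; rewrite (flex_mate_involutive mu_matching).
  rewrite /flex_mate; case xy: (partner mu x) => [y|] // x_C.
  by case: ifP => // /andP [flex_x flex_y]; exact: closed_C xy flex_x flex_y x_C.
have : \sum_(a in C) surplus u v mu a = - \sum_(a in C) surplus u v mu a.
  rewrite {1}(reindex_inj (inv_inj (flex_mate_involutive mu_matching))) /= -sumrN.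
  by apply: eq_big => [a|a _]; rewrite ?mate_C ?surplus_flex_mate.
by rewrite /surplus sumrB; lra.
Qed.

End Stable.

Section TwoStable.
Variables (u v u' v' : 'I_n -> R) (mu mu' : 'I_n -> option 'I_n).
Hypotheses (uv_stable : stable G u v mu) (uv'_stable : stable G u' v' mu').
Let mu_matching := stable_matching uv_stable.
Let mu'_matching := stable_matching uv'_stable.

Lemma payoff_le_unmatched a : partner mu a = None -> payoff u v a <= payoff u' v' a.
Proof.
move=> free; have fixed_a : flex_mate mu a = a by rewrite /flex_mate free.
by rewrite (payoff_share uv_stable fixed_a) (stable_share_unmatched uv'_stable free).
Qed.

Lemma payoff_le_rigid_pair a b : partner mu a = Some b -> ~~ (flexible a && flexible b) ->
  payoff u v a <= payoff u' v' a \/ payoff u v b <= payoff u' v' b.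
Proof.
move=> ab rigid.
have fixed_a : flex_mate mu a = a by rewrite /flex_mate ab (negbTE rigid).
have fixed_b : flex_mate mu b = b.
  by rewrite /flex_mate (partner_sym mu_matching ab) andbC (negbTE rigid).
rewrite (payoff_share uv_stable fixed_a) (payoff_share uv_stable fixed_b).
apply: (stable_share_rigid_pair uv'_stable mu_matching ab rigid).
Qed.

Lemma payoff_le_flex_pair a b : partner mu a = Some b -> flexible a -> flexible b ->
  payoff u v a + payoff u v b <= payoff u' v' a + payoff u' v' b.
Proof.
move=> ab flex_a flex_b.
have mate_a : flex_mate mu a = b by rewrite /flex_mate ab flex_a flex_b.
have := payoff_share_pair uv_stable a; rewrite mate_a => ->.
apply: (stable_share_flex_pair uv'_stable mu_matching ab flex_a flex_b).
Qed.

Lemma flex_component_coincide C : non_degenerate G ->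
  flex_component flexible (partner mu) (partner mu') C ->
  \sum_(a in C) (payoff u v a - payoff u' v' a) = 0 -> {in C, partner mu =1 partner mu'}.
Proof.
move=> nondeg [C_neq0 closed_C closed'_C minimal_C] sum0.
have forced_payoff_eq : forced_payoff G mu C = forced_payoff G mu' C.
  rewrite !forced_payoffE -(sum_payoff_closed uv_stable closed_C).
  rewrite -(sum_payoff_closed uv'_stable closed'_C).
  by apply/eqP; rewrite -subr_eq0 -sumrB sum0.
have minimal_forced C' : C' \proper C -> C' != set0 -> ~ (forced G mu C' /\ forced G mu' C').
  move=> /andP [sub_C /negP not_sup] C'_neq0.
  by move=> [/(forcedE mu_matching) ? /(forcedE mu'_matching) ?]; apply/not_sup/minimal_C.
have [same_P same_Q] := nondeg mu mu' mu_matching mu'_matching C C_neq0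
  ((forcedE mu_matching C).2 closed_C) ((forcedE mu'_matching C).2 closed'_C)
  minimal_forced forced_payoff_eq.
by case=> [i|j] /= a_C; [rewrite same_P | rewrite same_Q].
Qed.

End TwoStable.

Lemma stable_unmatched_stays u v u' v' mu mu' a : non_degenerate G ->
  stable G u v mu -> stable G u' v' mu' -> partner mu a = None -> partner mu' a = None.
Proof.
move=> nondeg uv_stable uv'_stable free.
have [mu_matching mu'_matching] := (stable_matching uv_stable, stable_matching uv'_stable).
(* The annotation [b : bool] is needed: [is_inl] is a coercion from sums to [bool]. *)
apply: (unmatched_stays_unmatched (m := fun b : bool => if b then partner mu else partner mu')
  (side := is_inl) (flex := flexible) (z := fun x => payoff u v x - payoff u' v' x)) => //.
- by case=> x y /=; apply: partner_sym.
- by case=> x y /=; apply: partner_side.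
- case=> x /= x_free; rewrite ?expr0 ?expr1 ?mul1r ?mulN1r.
    by have := payoff_le_unmatched uv_stable uv'_stable x_free; lra.
  by have := payoff_le_unmatched uv'_stable uv_stable x_free; lra.
- case=> x y /= xy rigid; rewrite ?expr0 ?expr1 ?mul1r ?mulN1r.
    by case: (payoff_le_rigid_pair uv_stable uv'_stable xy rigid) => ?; [left|right]; lra.
  by case: (payoff_le_rigid_pair uv'_stable uv_stable xy rigid) => ?; [left|right]; lra.
- case=> x y /= xy flex_x flex_y; rewrite ?expr0 ?expr1 ?mul1r ?mulN1r.
    by have := payoff_le_flex_pair uv_stable uv'_stable xy flex_x flex_y; lra.
  by have := payoff_le_flex_pair uv'_stable uv_stable xy flex_x flex_y; lra.
- by move=> C; apply: (flex_component_coincide uv_stable uv'_stable).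
Qed.

End Agents.

Theorem proposition5 (R : realFieldType) (n : nat) (G : rifle_game R n) :
  (forall i j, 0 <= beta G i j) -> (forall i j, 0 <= gamma G i j) ->
  (forall i, 0 <= resP G i) -> (forall j, 0 <= resQ G j) ->
  non_degenerate G ->
  forall (u v u' v' : 'I_n -> R) (mu mu' : 'I_n -> option 'I_n),
    stable G u v mu -> stable G u' v' mu' ->
    unmatched mu = unmatched mu'.
Proof.
move=> _ _ _ _ nondeg u v u' v' mu mu' uv_stable uv'_stable.
apply/setP => a; rewrite !unmatchedE !inE.
by apply/eqP/eqP; [exact: stable_unmatched_stays nondeg uv_stable uv'_stable|
                   exact: stable_unmatched_stays nondeg uv'_stable uv_stable].
Qed.
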